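(* For every even $n\ge 6$, $$|E_n| = 4\,|E_{n-2}| - \mathrm{Cat}(n/2-1) = 2\,|E_{n-1}| - \mathrm{Cat}(n/2-1),$$ where $\mathrm{Cat}(k)=\frac{1}{k+1}\binom{2k}{k}$ is the $k$-th Catalan number.
   Context: Let $D$ (OEIS A036991) be the set of nonnegative integers $m$ such that, reading the binary expansion of $m$ from the least significant bit to the most significant bit, at every point the number of 1's read so far is at least the number of 0's read so far. For $n\ge1$ let $M_n=2^n-1$ and let the $n$-level be $E_n=D\cap(M_{n-1},M_n]$, i.e. the elements of $D$ whose binary expansion has exactly $n$ digits. *)

From mathcomp Require Import all_boot all_order all_algebra.
Set Implicit Arguments. Unset Strict Implicit. Unset Printing Implicit Defensive.

Fixpoint bits_aux (fuel m : nat) : seq bool :=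
  match fuel with
  | 0 => [::]
  | f.+1 => if m == 0 then [::] else odd m :: bits_aux f m./2
  end.
Definition bits (m : nat) : seq bool := bits_aux m m.

(* m is in D (OEIS A036991): reading bits from LSB to MSB, at every prefix
   the number of 1's is at least the number of 0's. *)
Definition inD (m : nat) : bool :=
  all (fun k => count_mem false (take k (bits m)) <= count_mem true (take k (bits m)))
      (iota 0 (size (bits m)).+1).

Definition M (n : nat) : nat := 2 ^ n - 1.

(* E_n = D ∩ (M_{n-1}, M_n], as a list of the elements *)
Definition E (n : nat) : seq nat :=
  [seq m <- iota (M n.-1).+1 (M n - M n.-1) | inD m].

Definition catalan (k : nat) : nat := 'C(k.*2, k) %/ k.+1.

Example bits6 : bits 6 = [:: false; true; true]. Proof. by []. Qed.
Example E_sizes : [seq size (E k) | k <- iota 1 6] = [:: 1; 1; 2; 3; 6; 10]. Proof. by vm_compute. Qed.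

From mathcomp Require Import all_boot all_order all_algebra zify.

Set Implicit Arguments.
Unset Strict Implicit.
Unset Printing Implicit Defensive.

(* Dropping the leading 1, the elements of E_(L+1) are the ballot words of
   length L: bit strings, read from the least significant end, no prefix of
   which has more 0's than 1's.  Appending a bit to a ballot word keeps it
   ballot, except appending a 0 to a word of excess 0, so the number B_L of
   ballot words satisfies B_(L+1) = 2 B_L - A_L, where A_L counts the ballot
   words of excess 0.  These are Dyck words: A_L = Cat(L/2) for even L and
   A_L = 0 for odd L.  Taking L = n - 2 and L = n - 3 gives both identities. *)

Fixpoint lowbits (L r : nat) : seq bool :=
  if L is L'.+1 then odd r :: lowbits L' r./2 else [::].

Lemma size_lowbits L r : size (lowbits L r) = L.
Proof. by elim: L r => //= L IH r; rewrite IH. Qed.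

Lemma lowbits_rcons L r (b : bool) : r < 2 ^ L ->
  lowbits L.+1 (b * 2 ^ L + r) = rcons (lowbits L r) b.
Proof.
elim: L r => [|L IH] r; first by rewrite expn0 ltnS leqn0 => /eqP ->; case: b.
rewrite expnS => hr /=; rewrite -IH; last by have := odd_double_half r; lia.
have -> : b * (2 * 2 ^ L) + r = odd r + (b * 2 ^ L + r./2).*2.
  by rewrite -[in LHS](odd_double_half r); lia.
by rewrite /= half_bit_double oddD odd_double addbF oddb.
Qed.

Lemma bits_auxE f n m :
  n < f -> 2 ^ n <= m < 2 ^ n.+1 -> bits_aux f m = lowbits n.+1 m.
Proof.
elim: n f m => [|n IH] [|f] m //= hf.
  by rewrite expn0 expn1 => hm; have -> : m = 1 by [lia]; case: f {hf}.
rewrite !expnS => hm; have -> : (m == 0) = false by apply/eqP; lia.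
by rewrite (IH f) // expnS; have := odd_double_half m; lia.
Qed.

Lemma bitsE n m : 2 ^ n <= m < 2 ^ n.+1 -> bits m = lowbits n.+1 m.
Proof.
move=> hm; rewrite /bits (bits_auxE _ hm) //; have [lo _] := andP hm.
exact: leq_trans (ltn_expl n (ltnSn 1)) lo.
Qed.

Lemma count_predIC T (b a : pred T) s :
  count (predI b a) s + count (predI (predC b) a) s = count a s.
Proof. by rewrite -!count_filter count_predC size_filter. Qed.

(* Words of length [L] are encoded by the numbers [r < 2 ^ L], via [lowbits]. *)
Definition nwords L (P : pred (seq bool)) : nat :=
  count (P \o lowbits L) (iota 0 (2 ^ L)).

Lemma nwordsS L P :
  nwords L.+1 P = nwords L (P \o rcons^~ false) + nwords L (P \o rcons^~ true).
Proof.
rewrite /nwords expnS mul2n -addnn iotaD count_cat add0n.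
have -> : iota (2 ^ L) (2 ^ L) = map (addn (2 ^ L)) (iota 0 (2 ^ L)).
  by rewrite -iotaDl addn0.
rewrite count_map.
congr (_ + _); apply: eq_in_count => r; rewrite mem_iota add0n => hr /=.
  by rewrite -lowbits_rcons // mul0n.
by rewrite -lowbits_rcons // mul1n.
Qed.

Lemma eq_nwords L P Q : P =1 Q -> nwords L P = nwords L Q.
Proof. by move=> PQ; apply: eq_count => r /=. Qed.

Definition ballot (s : seq bool) : bool :=
  all (fun k => count_mem false (take k s) <= count_mem true (take k s))
      (iota 0 (size s).+1).

Definition ballot_excess e (s : seq bool) : bool :=
  ballot s && (count_mem true s == count_mem false s + e).

Lemma inDE m : inD m = ballot (bits m). Proof. by []. Qed.

Lemma ballot_count s : ballot s -> count_mem false s <= count_mem true s.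
Proof. by move/allP/(_ (size s)); rewrite mem_iota add0n ltnS leqnn take_size; apply. Qed.

Lemma ballot_rcons s b : ballot (rcons s b) =
  ballot s && (count_mem false (rcons s b) <= count_mem true (rcons s b)).
Proof.
rewrite /ballot size_rcons -addn1 iotaD all_cat all_seq1 add0n.
rewrite take_oversize ?size_rcons //; congr (_ && _).
by apply: eq_in_all => k; rewrite mem_iota add0n ltnS => hk; rewrite -cats1 takel_cat.
Qed.

Lemma count_mem_rcons (b x : bool) s :
  count_mem b (rcons s x) = count_mem b s + (x == b).
Proof. by rewrite -cats1 count_cat /= addn0. Qed.

Lemma ballot_rcons_true s : ballot (rcons s true) = ballot s.
Proof.
rewrite ballot_rcons !count_mem_rcons addn0 addn1.
by case b_s: (ballot s); rewrite //= ltnW // ltnS ballot_count.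
Qed.

Lemma ballot_rcons_false s : ballot (rcons s false) =
  ballot s && (count_mem false s < count_mem true s).
Proof. by rewrite ballot_rcons !count_mem_rcons addn0 addn1. Qed.

Lemma ballot_excess_rcons_false e s :
  ballot_excess e (rcons s false) = ballot_excess e.+1 s.
Proof.
rewrite /ballot_excess ballot_rcons_false !count_mem_rcons addn0 addn1.
by case: (ballot s) => //=; apply/idP/idP; lia.
Qed.

Lemma ballot_excess_rcons_true e s :
  ballot_excess e (rcons s true) = if e is e'.+1 then ballot_excess e' s else false.
Proof.
rewrite /ballot_excess ballot_rcons_true !count_mem_rcons addn0 addn1.
case b_s: (ballot s); last by case: e.
by have := ballot_count b_s; case: e => [|e] /= le; apply/idP/idP; lia.
Qed.

Lemma ballot_rcons_false_excess0 s :
  ballot (rcons s false) = ~~ ballot_excess 0 s && ballot s.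
Proof.
rewrite ballot_rcons_false /ballot_excess addn0.
by case b_s: (ballot s); rewrite ?andbF //= andbT ltn_neqAle ballot_count // andbT eq_sym.
Qed.

Lemma ballot_excess_size e s : ballot_excess e s -> size s = (count_mem false s).*2 + e.
Proof.
case/andP=> _ /eqP ex; rewrite -(count_predC (pred1 true)).
have -> : count (predC (pred1 true)) s = count_mem false s by apply: eq_count => -[].
lia.
Qed.

Notation nballot L := (nwords L ballot).
Notation nballot_excess L e := (nwords L (ballot_excess e)).

Lemma nballotS L : nballot L.+1 + nballot_excess L 0 = (nballot L).*2.
Proof.
rewrite nwordsS (eq_nwords _ ballot_rcons_true) -addnn addnAC; congr (_ + _).
rewrite /nwords -(count_predIC (ballot_excess 0 \o lowbits L) (ballot \o lowbits L)).
rewrite [RHS]addnC.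
congr (_ + _); apply: eq_count => r /=; first exact: ballot_rcons_false_excess0.
by rewrite /ballot_excess; case: (ballot _); rewrite ?andbT.
Qed.

Lemma nballot_excess0 e : nballot_excess 0 e = (e == 0).
Proof. by case: e. Qed.

Lemma nballot_excessS0 L : nballot_excess L.+1 0 = nballot_excess L 1.
Proof.
rewrite nwordsS (eq_nwords _ (ballot_excess_rcons_false 0)).
by rewrite (eq_nwords _ (ballot_excess_rcons_true 0)) /nwords count_pred0 addn0.
Qed.

Lemma nballot_excessSS L e :
  nballot_excess L.+1 e.+1 = nballot_excess L e.+2 + nballot_excess L e.
Proof.
rewrite nwordsS (eq_nwords _ (ballot_excess_rcons_false e.+1)).
by rewrite (eq_nwords _ (ballot_excess_rcons_true e.+1)).
Qed.

Lemma nballot_excess_eq0 L e : (L < e) || odd (L + e) -> nballot_excess L e = 0.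
Proof.
move=> h; rewrite /nwords (eq_count (a2 := pred0)) ?count_pred0 // => r /=.
apply/negP => /ballot_excess_size; rewrite size_lowbits => hL.
by move: h; rewrite hL; lia.
Qed.

(* The ballot numbers of the reflection principle. *)
Lemma nballot_excess_binom L e d : L = e + d.*2 ->
  nballot_excess L e + 'C(L, (d + e).+1) = 'C(L, d).
Proof.
elim: L e d => [|L IH] [|e] [|d] hL; try lia.
- by rewrite nballot_excess0.
- by rewrite nballot_excessS0 addn0 !binS; have := IH 1 d; rewrite addn1; lia.
- have eq_L : L = e by lia.
  subst L.
  rewrite nballot_excessSS (@nballot_excess_eq0 e e.+2) ?ltnS ?leqnSn //.
  rewrite add0n bin0 bin_small //.
  by have := IH e 0; rewrite bin_small // bin0; lia.
- have := IH e d.+1 ltac:(lia); have := IH e.+2 d ltac:(lia).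
  by rewrite nballot_excessSS !binS !addSn !addnS; lia.
Qed.

Lemma catalan_nballot_excess j : catalan j = nballot_excess j.*2 0.
Proof.
have := @nballot_excess_binom _ 0 j (esym (add0n _)); rewrite addn0 => binom.
have := mul_bin_left j.*2 j; rewrite -addnn addnK addnn => mul_bin.
rewrite /catalan (_ : 'C(j.*2, j) = j.+1 * nballot_excess j.*2 0) ?mulKn //; nia.
Qed.

Lemma size_E L : size (E L.+1) = nballot L.
Proof.
have pow_gt0 : 0 < 2 ^ L by rewrite expn_gt0.
rewrite /E /M /= size_filter.
have -> : (2 ^ L - 1).+1 = 2 ^ L + 0 by lia.
have -> : 2 ^ L.+1 - 1 - (2 ^ L - 1) = 2 ^ L by rewrite expnS; lia.
rewrite iotaDl count_map; apply: eq_in_count => r; rewrite mem_iota add0n => hr /=.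
rewrite inDE (@bitsE L); last by rewrite expnS; lia.
by have := lowbits_rcons true hr; rewrite mul1n => ->; rewrite ballot_rcons_true.
Qed.

Local Open Scope ring_scope.

Lemma Posz_subr_eq (x a c : nat) : a = (x + c)%N -> x%:Z = a%:Z - c%:Z.
Proof. by move=> ->; rewrite PoszD GRing.addrK. Qed.

Theorem proposition10 (n : nat) :
  (6 <= n)%N -> ~~ odd n ->
  (size (E n))%:Z = 4 * (size (E (n - 2)))%:Z - (catalan (n./2 - 1))%:Z /\
  (size (E n))%:Z = 2 * (size (E n.-1))%:Z - (catalan (n./2 - 1))%:Z.
Proof.
move=> n_ge6 /negbTE n_even.
have [k ->] : exists k, n = (k.+2).*2.
  by exists (n./2 - 2)%N; have := odd_double_half n; rewrite n_even; lia.
rewrite doubleK !doubleS subn1 subn2 /= !size_E catalan_nballot_excess doubleS.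
have odd_step := nballotS (k.*2).+1.
rewrite nballot_excess_eq0 ?addn0 in odd_step; last by rewrite /= odd_double.
have even_step := nballotS (k.*2).+2.
by split; rewrite -PoszM; apply: Posz_subr_eq; lia.
Qed.
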